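(* Let $a\geq 1$ and $b\geq 1$ be integers and let $x\in\Lambda^{a+b}$ satisfy $T_{a,b}^k(x)\to(0,\ldots,0)$ as $k\to\infty$. Then the series $\sum_{k\geq 0}x_a^{(k)}$ converges and $\sigma(x)=b\sum_{k\geq 0}x_a^{(k)}$.
   Context: For $n\geq 1$ let $\Lambda^n=\{x\in\mathbb{R}^n : 0\leq x_1\leq\cdots\leq x_n\}$. For integers $a,b\geq 1$ the map $T_{a,b}:\Lambda^{a+b}\to\Lambda^{a+b}$ sends $x$ to the vector obtained by arranging $x_1,\ldots,x_a,\,x_{a+1}-x_a,\ldots,x_{a+b}-x_a$ in nondecreasing order. Write $x^{(k)}=T_{a,b}^k(x)$ and $x^{(k)}_i$ for its $i$-th coordinate; $\sigma(x)=x_1+\cdots+x_{a+b}$. *)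

From HB Require Import structures.
From mathcomp Require Import all_boot all_order all_algebra.
From mathcomp Require Import all_classical all_reals all_analysis.
Set Implicit Arguments. Unset Strict Implicit. Unset Printing Implicit Defensive.
Import Order.TTheory GRing.Theory Num.Theory.
Import numFieldNormedType.Exports.
Local Open Scope ring_scope.

(* Vectors of R^n are represented as sequences of length n; coordinate x_i
   (1-based, as in the paper) is [nth 0 x (i-1)]. *)

Definition Lambda (R : realType) (n : nat) (x : seq R) : Prop :=
  size x = n /\ 0 <= nth 0 x 0 /\ sorted <=%R x.

Definition Tab (R : realType) (a b : nat) (x : seq R) : seq R :=
  let xa := nth 0 x a.-1 in
  sort <=%R (take a x ++ [seq y - xa | y <- drop a x]).

Definition Titer (R : realType) (a b k : nat) (x : seq R) : seq R :=
  iter k (Tab a b) x.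

Definition sigma (R : realType) (x : seq R) : R := \sum_(y <- x) y.

Definition coordseq (R : realType) (a b i : nat) (x : seq R) : R^nat :=
  fun k => nth 0 (Titer a b k x) i.-1.

From HB Require Import structures.
From mathcomp Require Import all_boot all_order all_algebra.
From mathcomp Require Import all_classical all_reals all_analysis.
Import Order.TTheory GRing.Theory Num.Theory.
Import numFieldNormedType.Exports.
Local Open Scope classical_set_scope.
Local Open Scope ring_scope.

(* Each step of [T_{a,b}] lowers [sigma] by exactly [b x_a], so by telescoping
   [sigma x = sigma x^(n) + b (x_a^(0) + ... + x_a^(n-1))].  Since every
   coordinate of [x^(n)] tends to 0, so does [sigma x^(n)], and the partial sums
   converge to [sigma x / b]. *)
Lemma sumr_const_seq (V : nmodType) (I : Type) (r : seq I) (c : V) :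
  \sum_(i <- r) c = c *+ size r.
Proof. by elim: r => [|? r IH]; rewrite ?big_nil ?big_cons ?IH ?mulrS. Qed.

Section Tab_invariants.
Context {R : realType} {a b : nat}.

Lemma size_Tab (x : seq R) : size (Tab a b x) = size x.
Proof.
by rewrite /Tab size_sort size_cat size_map -size_cat cat_take_drop.
Qed.

Lemma sigma_Tab (x : seq R) :
  sigma (Tab a b x) = sigma x - (size x - a)%:R * nth 0 x a.-1.
Proof.
rewrite /sigma /Tab (perm_big _ (permEl (perm_sort _ _))) big_cat /=.
rewrite big_map sumrB sumr_const_seq size_drop addrA -big_cat.
by rewrite cat_take_drop mulr_natl.
Qed.

Lemma size_Titer k (x : seq R) : size (Titer a b k x) = size x.
Proof. by elim: k => //= k IH; rewrite size_Tab. Qed.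

Lemma sigma_Titer (x : seq R) n : size x = (a + b)%N ->
  sigma x = sigma (Titer a b n x) + b%:R * series (coordseq a b a x) n.
Proof.
move=> size_x; elim: n => [|n IH].
  by rewrite /series /= big_geq ?mulr0 ?addr0.
rewrite [in RHS]/Titer iterS -/(Titer a b n x) sigma_Tab size_Titer size_x addKn.
by rewrite seriesSr mulrDr IH addrACA addNr addr0.
Qed.

Lemma sigma_nth (s : seq R) : sigma s = \sum_(i < size s) nth 0 s i.
Proof. by rewrite /sigma (big_nth 0) big_mkord. Qed.

Lemma sigma_Titer_cvg0 (x : seq R) : size x = (a + b)%N ->
  (forall i, (1 <= i <= a + b)%N -> coordseq a b i x @ \oo --> 0) ->
  (fun n => sigma (Titer a b n x)) @ \oo --> 0.
Proof.
move=> size_x coord0.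
under eq_cvg do rewrite sigma_nth size_Titer size_x.
suff: (fun n => \sum_(i < a + b) coordseq a b i.+1 x n) @ \oo -->
    \sum_(i < a + b) (0 : R) by rewrite big1.
apply: cvg_big => [|i _]; first exact: add_continuous.
by apply: coord0; rewrite ltn_ord.
Qed.

End Tab_invariants.

Theorem lemma4p3 (R : realType) (a b : nat) (x : seq R) :
  (1 <= a)%N -> (1 <= b)%N -> Lambda (a + b) x ->
  (forall i, (1 <= i <= a + b)%N -> coordseq a b i x @ \oo --> 0) ->
  cvgn (series (coordseq a b a x)) /\
  sigma x = b%:R * limn (series (coordseq a b a x)).
Proof.
move=> _ b_gt0 [size_x _] coord0.
have b_neq0 : (b%:R : R) != 0 by rewrite pnatr_eq0 -lt0n.
have series_eq : series (coordseq a b a x) =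
    (fun n => (sigma x - sigma (Titer a b n x)) / b%:R).
  by apply: funext => n; rewrite (sigma_Titer _ n size_x) addrC addKr mulrC mulKf.
have series_cvg : series (coordseq a b a x) @ \oo --> sigma x / b%:R.
  rewrite series_eq; apply: cvgMl; rewrite -[X in _ --> X](subr0 (sigma x)).
  by apply: cvgB; [exact: cvg_cst | exact: sigma_Titer_cvg0].
split; first by apply/cvg_ex; exists (sigma x / b%:R).
by rewrite (cvg_lim _ series_cvg) // mulrC mulfVK.
Qed.
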